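(* Let $\mathcal{X}$ be a finite set of prompts, $\mathcal{Y}$ a finite set of outputs, $r:\mathcal{X}\times\mathcal{Y}\to\{0,1\}$ a reward function, and $\pi_\theta$ a tabular policy. Suppose $\theta(t)$, $t\ge 0$, follows the gradient flow $\frac{d}{dt}\theta(t) = \nabla \mathcal{J}_{\mathrm{RL}}(\theta(t))$, where $\mathcal{J}_{\mathrm{RL}}(\theta) = \sum_{x\in\mathcal{X}}\mathbb{E}_{y\sim\pi_\theta(\cdot\mid x)}[r(x,y)]$. Then for any prompt $x \in \mathcal{X}$, any output $y \in \mathcal{Y}$, and any time $T \geq 0$: $$\frac{d}{dt}\pi_{\theta(t)}(y\mid x) = \pi_{\theta(t)}(y\mid x)^2\left[r(x, y) - \mathbb{E}_{y'' \sim \pi_{\theta(t)}(\cdot \mid x)}[r(x, y'')]\right] - \pi_{\theta(t)}(y\mid x)\sum_{y' \in \mathcal{Y}}\pi_{\theta(t)}(y'\mid x)^2\left[r(x, y') - \mathbb{E}_{y'' \sim \pi_{\theta(t)}(\cdot \mid x)}[r(x, y'')]\right],$$ and $$\pi_{\theta(T)}(y\mid x) \leq \pi_{\theta(0)}(y\mid x) \cdot \exp(2T).$$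
   Context: A tabular policy assigns an independent trainable logit $\theta_{y,x}\in\mathbb{R}$ to each pair $(y,x)\in\mathcal{Y}\times\mathcal{X}$, with $\pi_\theta(y\mid x) = \exp(\theta_{y,x})/\sum_{y'\in\mathcal{Y}}\exp(\theta_{y',x})$. *)

From HB Require Import structures.
From mathcomp Require Import all_boot all_order all_algebra.
From mathcomp Require Import all_classical all_reals all_analysis.
Set Implicit Arguments. Unset Strict Implicit. Unset Printing Implicit Defensive.
Import Order.TTheory GRing.Theory Num.Theory.
Import numFieldNormedType.Exports.
Local Open Scope ring_scope.

Section Tabular.
Variables (R : realType) (X Y : finType).

Definition pol (theta : Y -> X -> R) (y : Y) (x : X) : R :=
  expR (theta y x) / \sum_(y' : Y) expR (theta y' x).

(* E_{y ~ pi_theta(.|x)} [r(x,y)], reward r : X -> Y -> {0,1} encoded as bool *)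
Definition exp_reward (r : X -> Y -> bool) (theta : Y -> X -> R) (x : X) : R :=
  \sum_(y : Y) pol theta y x * (r x y)%:R.

Definition J_RL (r : X -> Y -> bool) (theta : Y -> X -> R) : R :=
  \sum_(x : X) exp_reward r theta x.

Definition upd (theta : Y -> X -> R) (y : Y) (x : X) (s : R) : Y -> X -> R :=
  fun y' x' => if (y' == y) && (x' == x) then s else theta y' x'.

Definition grad_J (r : X -> Y -> bool) (theta : Y -> X -> R) (y : Y) (x : X) : R :=
  derive1 (fun s => J_RL r (upd theta y x s)) (theta y x).

End Tabular.

From HB Require Import structures.
From mathcomp Require Import all_boot all_order all_algebra.
From mathcomp Require Import all_classical all_reals all_analysis.
From mathcomp Require Import ring lra.
Set Implicit Arguments. Unset Strict Implicit. Unset Printing Implicit Defensive.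
Import Order.TTheory GRing.Theory Num.Theory.
Import numFieldNormedType.Exports.
Local Open Scope ring_scope.

(* Along the gradient flow the logit theta_{y,x} moves at the policy-gradient rate
   pi(y|x) (r(x,y) - E_x[r]): only the x-summand of J_RL depends on it, and the
   derivative of a softmax mean along one logit is a covariance.  The chain rule
   through the softmax then gives the derivative of pi(y|x).  Since rewards and
   their mean lie in [0,1], every bracket lies in [-1,1], so this derivative is at
   most pi(y|x)^2 + pi(y|x) sum_y' pi(y'|x)^2 <= 2 pi(y|x), and Gronwall's
   inequality gives the exponential bound. *)

Lemma is_derive_big_sum (R : numFieldType) (V W : normedModType R) (I : finType)
    (h : I -> V -> W) (dh : I -> W) (x v : V) :
  (forall i, is_derive x v (h i) (dh i)) ->
  is_derive x v (fun s => \sum_i h i s) (\sum_i dh i).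
Proof.
move=> dhi; have -> : (fun s => \sum_i h i s) = \sum_i h i.
  by apply/funext => s; rewrite fct_sumE.
by elim/big_ind2 : _ => // *; [exact: is_derive_cst | exact: is_deriveD].
Qed.

Lemma gronwall_expR (R : realType) (p dp : R -> R) (c T : R) :
  (forall t : R, 0 <= t -> is_derive t 1 p (dp t)) ->
  (forall t : R, 0 <= t -> dp t <= c * p t) ->
  0 <= T -> p T <= p 0 * expR (c * T).
Proof.
move=> dp_p dp_le T_ge0.
(* p t * exp (- c t) is nonincreasing, by the mean value theorem. *)
pose g (t : R) := p t * expR (- c * t).
pose dg (t : R) := expR (- c * t) * (dp t - c * p t).
have dg_g (t : R) : 0 <= t -> is_derive t 1 g (dg t).
  move=> t_ge0; have dlin : is_derive t 1 (fun s : R => - c * s) (- c).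
    by apply: is_derive_eq (is_deriveZ (- c) (is_derive_id t 1)) (mulr1 _).
  have dexp := is_derive1_comp (is_derive_expR _) dlin.
  apply: is_derive_eq (is_deriveM (dp_p t t_ge0) dexp) _.
  by rewrite /GRing.scale /= /dg; ring.
have [s s_in gTg0] : exists2 s, s \in `[0, T] & g T - g 0 = dg s * (T - 0).
  apply: MVT_segment => // [t|]; first by rewrite in_itv /= => /andP[/ltW /dg_g].
  apply: derivable_within_continuous => t; rewrite in_itv /= => /andP[/dg_g].
  by case.
have s_ge0 : 0 <= s by move: s_in; rewrite in_itv /= => /andP[].
have dg_le0 : dg s <= 0.
  by rewrite mulr_ge0_le0 ?expR_ge0 // subr_le0 dp_le.
have gT_le : g T <= g 0.
  by rewrite -subr_le0 gTg0 mulr_le0_ge0 // subr0.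
have -> : p T = g T * expR (c * T) by rewrite -mulrA -expRD mulNr addNr expR0 mulr1.
have <- : g 0 = p 0 by rewrite /g mulr0 expR0 mulr1.
by rewrite ler_wpM2r ?expR_ge0.
Qed.

Section Softmax.
Variables (R : realType) (Y : finType).

Definition softmax (z : Y -> R) (y : Y) : R := expR (z y) / \sum_y' expR (z y').

Lemma sum_expR_gt0 (z : Y -> R) (y : Y) : 0 < \sum_y' expR (z y').
Proof. by rewrite (bigD1 y) //= ltr_pwDl ?expR_gt0 // sumr_ge0. Qed.

Lemma softmax_ge0 z y : 0 <= softmax z y.
Proof. by rewrite divr_ge0 ?expR_ge0 ?ltW ?(sum_expR_gt0 z y). Qed.

Lemma sum_softmax z (y : Y) : \sum_y' softmax z y' = 1.
Proof. by rewrite -mulr_suml divff // gt_eqF // (sum_expR_gt0 z y). Qed.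

Lemma is_derive_softmax (z : R -> Y -> R) (dz : Y -> R) (t : R) (y : Y) :
  (forall y', is_derive t 1 (z^~ y') (dz y')) ->
  is_derive t 1 (fun s => softmax (z s) y)
    (softmax (z t) y * (dz y - \sum_y' softmax (z t) y' * dz y')).
Proof.
move=> dz_z.
have dexp y' : is_derive t 1 (fun s => expR (z s y')) (expR (z t y') * dz y').
  exact: is_derive1_comp.
have S_neq0 : \sum_y' expR (z t y') != 0 by rewrite gt_eqF // (sum_expR_gt0 _ y).
have dsoft := is_deriveM (dexp y) (is_deriveV S_neq0 (is_derive_big_sum dexp)).
apply: is_derive_eq dsoft _; rewrite /softmax /GRing.scale /=.
under [X in _ = _ * (_ - X)]eq_bigr => i _ do rewrite mulrAC.
by rewrite -mulr_suml; field.
Qed.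

Lemma is_derive_softmax_mean (z : R -> Y -> R) (dz a : Y -> R) (t : R) :
  (forall y', is_derive t 1 (z^~ y') (dz y')) ->
  is_derive t 1 (fun s => \sum_y' softmax (z s) y' * a y')
    (\sum_y' softmax (z t) y' * dz y' * (a y' - \sum_y'' softmax (z t) y'' * a y'')).
Proof.
move=> dz_z.
have dterm y' := is_deriveM (is_derive_softmax y' dz_z) (is_derive_cst (a y') t 1).
apply: is_derive_eq (is_derive_big_sum dterm) _.
rewrite /GRing.scale /=.
set p := softmax (z t); set M := \sum_y' p y' * dz y'; set m := \sum_y' p y' * a y'.
transitivity (\sum_i p i * dz i * a i - M * m).
  by rewrite /m mulr_sumr -sumrB; apply: eq_bigr => i _; ring.
by rewrite /M mulr_suml -sumrB; apply: eq_bigr => i _; ring.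
Qed.

End Softmax.

Lemma prob_flow_rate_le (R : realFieldType) (Y : finType) (q a : Y -> R) (y : Y) :
  (forall y', 0 <= q y') -> \sum_y' q y' = 1 -> (forall y', `|a y'| <= 1) ->
  q y ^+ 2 * a y - q y * \sum_y' q y' ^+ 2 * a y' <= 2 * q y.
Proof.
move=> q_ge0 q_sum1 a_le1.
have q_le1 y' : q y' <= 1.
  by rewrite -q_sum1 (bigD1 y') //= lerDl sumr_ge0.
have term_le y' : `|q y' ^+ 2 * a y'| <= q y'.
  rewrite normrM ger0_norm ?sqr_ge0 // (le_trans (ler_piMr _ (a_le1 y'))) ?sqr_ge0 //.
  by rewrite expr2 ler_piMr.
have first_le : q y ^+ 2 * a y <= q y := le_trans (ler_norm _) (term_le y).
have sum_ge : - (\sum_y' q y' ^+ 2 * a y') <= 1.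
  rewrite -q_sum1 (le_trans _ (ler_sum _ (fun y' _ => term_le y'))) //.
  by rewrite (le_trans _ (ler_norm_sum _ _ _)) // -normrN ler_norm.
have second_le : - (q y * \sum_y' q y' ^+ 2 * a y') <= q y.
  by rewrite -mulrN ler_piMr.
lra.
Qed.

Section Tabular.
Variables (R : realType) (X Y : finType).
Implicit Types (r : X -> Y -> bool) (th : Y -> X -> R).

Definition pol_flow_rate r th (y : Y) (x : X) : R :=
  pol th y x ^+ 2 * ((r x y)%:R - exp_reward r th x)
  - pol th y x * \sum_y' pol th y' x ^+ 2 * ((r x y')%:R - exp_reward r th x).

Lemma polE th y x : pol th y x = softmax (th ^~ x) y.
Proof. by []. Qed.

Lemma upd_id th y x : upd th y x (th y x) = th.
Proof.
apply/funext => y'; apply/funext => x'; rewrite /upd.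
by case: andP => [[/eqP-> /eqP->]|].
Qed.

Lemma upd_neq th y x s x' : x' != x -> upd th y x s ^~ x' = th ^~ x'.
Proof. by move=> x'x; apply/funext => y'; rewrite /upd (negbTE x'x) andbF. Qed.

Lemma is_derive_upd th y x y' :
  is_derive (th y x) 1 (fun s => upd th y x s y' x) (y' == y)%:R.
Proof.
rewrite /upd eqxx andbT; case: (y' == y); [exact: is_derive_id | exact: is_derive_cst].
Qed.

Lemma J_RL_upd r th y x s :
  J_RL r (upd th y x s) =
  exp_reward r (upd th y x s) x + \sum_(x' | x' != x) exp_reward r th x'.
Proof.
rewrite /J_RL (bigD1 x) //=; congr (_ + _); apply: eq_bigr => x' x'x.
by apply: eq_bigr => y' _; rewrite !polE upd_neq.
Qed.

Lemma grad_J_tabular r th y x :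
  grad_J r th y x = pol th y x * ((r x y)%:R - exp_reward r th x).
Proof.
pose C := \sum_(x' | x' != x) exp_reward r th x'.
rewrite /grad_J derive1E.
have -> : (fun s => J_RL r (upd th y x s)) =
          (fun s => \sum_y' softmax (upd th y x s ^~ x) y' * (r x y')%:R) + cst C.
  by apply/funext => s; rewrite J_RL_upd.
have dmean := is_derive_softmax_mean (fun y' => (r x y')%:R) (is_derive_upd th y x).
have [_ ->] := is_deriveD dmean (is_derive_cst C (th y x) 1).
rewrite upd_id addr0 (bigD1 y) //= eqxx mulr1 [X in _ + X]big1 ?addr0 // => y' /negbTE ->.
by rewrite mulr0 mul0r.
Qed.

Lemma exp_reward_ge0 r th x : 0 <= exp_reward r th x.
Proof. by rewrite sumr_ge0 // => y' _; rewrite mulr_ge0 ?softmax_ge0. Qed.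

Lemma exp_reward_le1 r th x (y : Y) : exp_reward r th x <= 1.
Proof.
rewrite -(sum_softmax (th ^~ x) y) ler_sum // => y' _.
by rewrite ler_piMr ?softmax_ge0 // lern1 leq_b1.
Qed.

Lemma reward_gap_le1 r th x y : `|(r x y)%:R - exp_reward r th x| <= 1.
Proof.
have := exp_reward_ge0 r th x; have := exp_reward_le1 r th x y.
by rewrite ler_norml; case: (r x y) => /= ? ?; apply/andP; split; lra.
Qed.

Lemma is_derive_pol_flow r (theta : R -> Y -> X -> R) (x : X) (y : Y) (t : R) :
  (forall y', is_derive t 1 (fun s => theta s y' x) (grad_J r (theta t) y' x)) ->
  is_derive t 1 (fun s => pol (theta s) y x) (pol_flow_rate r (theta t) y x).
Proof.
move=> dtheta; apply: is_derive_eq (is_derive_softmax y dtheta) _.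
rewrite /pol_flow_rate grad_J_tabular.
under eq_bigr => y' _ do rewrite grad_J_tabular mulrA -expr2.
by rewrite -!polE; ring.
Qed.

Lemma pol_flow_rate_le r th y x : pol_flow_rate r th y x <= 2 * pol th y x.
Proof.
apply: (prob_flow_rate_le (q := pol th ^~ x)
          (a := fun y' => (r x y')%:R - exp_reward r th x)) => [y'||y'].
- exact: softmax_ge0.
- exact: sum_softmax.
- exact: reward_gap_le1.
Qed.
End Tabular.

Theorem lemma2 (R : realType) (X Y : finType) (r : X -> Y -> bool)
  (theta : R -> Y -> X -> R)
  (Hflow : forall t : R, 0 <= t -> forall (y : Y) (x : X),
     is_derive t 1 (fun s => theta s y x) (grad_J r (theta t) y x)) :
  forall (x : X) (y : Y) (T : R), 0 <= T ->
    is_derive T 1 (fun t => pol (theta t) y x)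
      (pol (theta T) y x ^+ 2 * ((r x y)%:R - exp_reward r (theta T) x)
       - pol (theta T) y x *
         \sum_(y' : Y) pol (theta T) y' x ^+ 2 *
                       ((r x y')%:R - exp_reward r (theta T) x))
    /\ pol (theta T) y x <= pol (theta 0) y x * expR (2 * T).
Proof.
move=> x y T T_ge0.
have dpol (t : R) : 0 <= t ->
    is_derive t 1 (fun s => pol (theta s) y x) (pol_flow_rate r (theta t) y x).
  by move=> t_ge0; apply: is_derive_pol_flow => y'; exact: Hflow.
split; first exact: dpol.
by apply: gronwall_expR dpol _ T_ge0 => t _; exact: pol_flow_rate_le.
Qed.
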